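(* Let $A$ be a Noetherian commutative ring with identity, let $A[\mathbf{x}]=A[x_1,\ldots,x_n]$ be equipped with a monomial order, let $I\subset A[\mathbf{x}]$ be an ideal, and let $B=A/(I\cap A)$. Then $$\mathrm{in}(I)\,B[\mathbf{x}]=\mathrm{in}(I\,B[\mathbf{x}]).$$
   Context: A monomial order $>$ is a total order on monomials such that $\mathbf{x}^E>\mathbf{x}^F$ implies $\mathbf{x}^G\mathbf{x}^E>\mathbf{x}^G\mathbf{x}^F$, and $x_i>1$ for each $i$; the same order is used over $B$. $\mathrm{in}(f)$ is the greatest term $c\,\mathbf{x}^E$ ($c\neq0$) of a nonzero polynomial $f$; $\mathrm{in}(I)$ is the ideal generated by all $\mathrm{in}(f)$, $f\in I$. $K\,B[\mathbf{x}]$ denotes the ideal of $B[\mathbf{x}]$ generated by the image of $K\subset A[\mathbf{x}]$ under the coefficientwise quotient map. *)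

From HB Require Import structures.
From mathcomp Require Import all_boot all_order all_algebra.
From mathcomp Require Import mpoly.
Set Implicit Arguments. Unset Strict Implicit. Unset Printing Implicit Defensive.
Import GRing.Theory.
Local Open Scope ring_scope.

Definition is_ideal (R : comNzRingType) (J : R -> Prop) : Prop :=
  [/\ J 0, (forall x y, J x -> J y -> J (x + y)) & (forall r x, J x -> J (r * x))].

Definition gen_ideal (R : comNzRingType) (S : R -> Prop) : R -> Prop :=
  fun x => forall J : R -> Prop, is_ideal J -> (forall s, S s -> J s) -> J x.

Definition noetherian (R : comNzRingType) : Prop :=
  forall J : R -> Prop, is_ideal J ->
    exists s : seq R, forall x, J x <-> gen_ideal (fun y => y \in s) x.

Definition monomial_order (n : nat) (lt : rel 'X_{1..n}) : Prop :=
  [/\ irreflexive lt,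
      transitive lt,
      (forall E F : 'X_{1..n}, E != F -> lt E F || lt F E),
      (forall E F G : 'X_{1..n}, lt E F -> lt (G + E)%MM (G + F)%MM) &
      (forall i : 'I_n, lt 0%MM U_(i)%MM)].

Definition is_lead_mono (n : nat) (R : nzRingType) (lt : rel 'X_{1..n})
    (f : {mpoly R[n]}) (E : 'X_{1..n}) : Prop :=
  E \in msupp f /\ forall F, F \in msupp f -> F != E -> lt F E.

Definition initial_term (n : nat) (R : nzRingType) (lt : rel 'X_{1..n})
    (f t : {mpoly R[n]}) : Prop :=
  f != 0 /\ exists E, is_lead_mono lt f E /\ t = f@_E *: 'X_[E].

Definition initial_ideal (n : nat) (R : comNzRingType) (lt : rel 'X_{1..n})
    (I : {mpoly R[n]} -> Prop) : {mpoly R[n]} -> Prop :=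
  gen_ideal (fun t => exists f, I f /\ initial_term lt f t).

Definition ext_ideal (n : nat) (A B : comNzRingType) (phi : A -> B)
    (K : {mpoly A[n]} -> Prop) : {mpoly B[n]} -> Prop :=
  gen_ideal (fun q => exists p, K p /\ q = map_mpoly phi p).

From HB Require Import structures.
From mathcomp Require Import all_boot all_order all_algebra.
From mathcomp Require Import mpoly.
Set Implicit Arguments. Unset Strict Implicit. Unset Printing Implicit Defensive.
Import GRing.Theory.
Local Open Scope ring_scope.

(* For [in(I) B[x] ⊆ in(I B[x])]: the image of [in(f)] under [phi] is either 0
   or [in(phi f)], since the leading monomial of [f] stays leading in [phi f]
   as long as its coefficient survives.
   For the converse: as [phi] is surjective, every element of [I B[x]] is
   [phi f] with [f] in [I].  The terms of [f] with coefficient in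
   [ker phi = I ∩ A] add up to an element of [I]; dropping them leaves [f'] in
   [I] with [phi f' = phi f] and [msupp f' = msupp (phi f')], so that
   [in(phi f) = phi (in f')]. *)

Section Ideals.
Variable R : comNzRingType.
Implicit Types (J S : R -> Prop) (x y : R).

Lemma ideal0 J : is_ideal J -> J 0.
Proof. by case. Qed.

Lemma idealB J x y : is_ideal J -> J x -> J y -> J (x - y).
Proof. by case=> _ JD JM Jx Jy; apply: JD => //; rewrite -mulN1r; apply: JM. Qed.

Lemma idealM J x y : is_ideal J -> J x -> J (x * y).
Proof. by case=> _ _ JM Jx; rewrite mulrC; apply: JM. Qed.

Lemma ideal_sum J (I : Type) (r : seq I) (P : pred I) (F : I -> R) :
  is_ideal J -> (forall i, P i -> J (F i)) -> J (\sum_(i <- r | P i) F i).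
Proof. by case=> J0 JD _ JF; apply: big_ind. Qed.

Lemma gen_ideal_is_ideal S : is_ideal (gen_ideal S).
Proof.
split=> [J [J0 _ _] _ //|x y Sx Sy J JJ JS|a x Sx J JJ JS].
- by case: (JJ) => _ JD _; apply: JD; [apply: Sx | apply: Sy].
- by case: (JJ) => _ _ JM; apply: JM; apply: Sx.
Qed.

Lemma mem_gen_ideal S x : S x -> gen_ideal S x.
Proof. by move=> Sx J _; apply. Qed.

Lemma gen_ideal_min S J x :
  is_ideal J -> (forall s, S s -> J s) -> gen_ideal S x -> J x.
Proof. by move=> JJ JS; apply. Qed.

Lemma is_ideal_preim (T : comNzRingType) (f : {rmorphism R -> T}) (J : T -> Prop) :
  is_ideal J -> is_ideal (fun x => J (f x)).
Proof.
case=> J0 JD JM; split=> [|x y Jx Jy|a x Jx]; first by rewrite rmorph0.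
- by rewrite rmorphD; apply: JD.
- by rewrite rmorphM; apply: JM.
Qed.

End Ideals.

Section MFilter.
Variables (n : nat) (R : nzRingType).
Implicit Types (f : {mpoly R[n]}) (P : pred 'X_{1..n}).

Definition mfilter P f : {mpoly R[n]} := \sum_(m <- msupp f | P m) f@_m *: 'X_[m].

Lemma mcoeff_mfilter P f F : (mfilter P f)@_F = if P F then f@_F else 0.
Proof.
rewrite raddf_sum big_mkcond /=; under eq_bigr do rewrite mcoeffZ mcoeffX.
have [Ff|] := boolP (F \in msupp f).
  rewrite (bigD1_seq F) ?msupp_uniq //= big1 => [|m /negbTE mF];
    by case: ifP; rewrite ?eqxx ?mF ?mulr1 ?mulr0 ?addr0.
rewrite mcoeff_msupp negbK => /eqP f0; rewrite f0 if_same big1_seq // => m /= fm.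
by case: ifP => // _; case: eqP => [mF | _]; rewrite ?mulr0 // mF f0 mul0r.
Qed.

Lemma mfilterID P f : mfilter P f + mfilter (predC P) f = f.
Proof.
apply/mpolyP=> F; rewrite mcoeffD !mcoeff_mfilter /=.
by case: (P F); rewrite ?addr0 ?add0r.
Qed.

End MFilter.

Section LeadMono.
Variables (n : nat) (R : nzRingType) (lt : rel 'X_{1..n}).
Implicit Types (f : {mpoly R[n]}) (E : 'X_{1..n}).

Lemma is_lead_mono_subset (S : nzRingType) f (g : {mpoly S[n]}) E :
  {subset msupp g <= msupp f} -> E \in msupp g ->
  is_lead_mono lt f E -> is_lead_mono lt g E.
Proof. by move=> gf Eg [_ Emax]; split=> // F /gf; apply: Emax. Qed.

Lemma initial_term_lead f E :
  is_lead_mono lt f E -> initial_term lt f (f@_E *: 'X_[E]).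
Proof.
move=> [Ef Emax]; split; last by exists E.
by apply: contraTneq Ef => ->; rewrite msupp0.
Qed.

End LeadMono.

Section MapMpoly.
Variables (n : nat) (A B : nzRingType) (phi : {rmorphism A -> B}).
Implicit Types (f : {mpoly A[n]}) (E F : 'X_{1..n}).

Lemma mem_msupp_map f F : (F \in msupp (map_mpoly phi f)) = (phi f@_F != 0).
Proof. by rewrite mcoeff_msupp mcoeff_map_mpoly. Qed.

Lemma msupp_map_subset f : {subset msupp (map_mpoly phi f) <= msupp f}.
Proof.
move=> F; rewrite mem_msupp_map mcoeff_msupp.
by apply: contraNneq => ->; rewrite rmorph0.
Qed.

Lemma map_mpoly_term f E :
  map_mpoly phi (f@_E *: 'X_[E]) = (map_mpoly phi f)@_E *: 'X_[E].
Proof. by rewrite map_mpolyZ map_mpolyX mcoeff_map_mpoly. Qed.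

Lemma is_lead_mono_map (lt : rel 'X_{1..n}) f E :
  phi f@_E != 0 -> is_lead_mono lt f E -> is_lead_mono lt (map_mpoly phi f) E.
Proof.
move=> fE; apply: is_lead_mono_subset; first exact: msupp_map_subset.
by rewrite mem_msupp_map.
Qed.

Lemma map_mpoly_surj :
  (forall b : B, exists a : A, phi a = b) ->
  forall q : {mpoly B[n]}, exists p : {mpoly A[n]}, map_mpoly phi p = q.
Proof.
move=> phi_surj q.
have lift_ex b : exists a, phi a == b by have [a <-] := phi_surj b; exists a.
exists (\sum_(m <- msupp q) xchoose (lift_ex q@_m) *: 'X_[m]).
rewrite [RHS]mpolyE raddf_sum; apply: eq_bigr => m _ /=.
by rewrite map_mpolyZ map_mpolyX (eqP (xchooseP (lift_ex _))).
Qed.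

Definition drop_ker_terms f : {mpoly A[n]} := mfilter [pred m | phi f@_m != 0] f.

Lemma map_drop_ker_terms f : map_mpoly phi (drop_ker_terms f) = map_mpoly phi f.
Proof.
apply/mpolyP=> F; rewrite !mcoeff_map_mpoly mcoeff_mfilter /=.
by case: eqP => // ->; rewrite rmorph0.
Qed.

Lemma msupp_drop_ker_terms f :
  msupp (drop_ker_terms f) =i msupp (map_mpoly phi (drop_ker_terms f)).
Proof.
move=> F; apply/idP/idP; last exact: msupp_map_subset.
rewrite map_drop_ker_terms mem_msupp_map mcoeff_msupp mcoeff_mfilter /=.
by case: ifP; rewrite ?eqxx.
Qed.

End MapMpoly.

Section ExtIdeal.
Variables (n : nat) (A B : comNzRingType) (phi : {rmorphism A -> B}).
Implicit Types (I S : {mpoly A[n]} -> Prop) (J : {mpoly B[n]} -> Prop).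

Lemma ext_gen_ideal_min S J q :
  is_ideal J -> (forall s, S s -> J (map_mpoly phi s)) ->
  ext_ideal phi (gen_ideal S) q -> J q.
Proof.
move=> JJ JS /gen_ideal_min; apply=> // _ [p [Sp ->]].
exact: gen_ideal_min (is_ideal_preim (map_mpoly phi) JJ) JS Sp.
Qed.

Lemma drop_ker_terms_ideal I f :
  is_ideal I -> (forall a, phi a = 0 -> I a%:MP) -> I f -> I (drop_ker_terms phi f).
Proof.
move=> II ker If.
have -> : drop_ker_terms phi f = f - mfilter (predC [pred m | phi f@_m != 0]) f.
  by apply/esym/eqP; rewrite subr_eq mfilterID.
apply: idealB => //; apply: ideal_sum => // m /negPn /eqP fm.
by rewrite -mul_mpolyC; apply: idealM => //; apply: ker.
Qed.

Hypothesis phi_surj : forall b : B, exists a : A, phi a = b.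

Lemma ext_ideal_image I g :
  is_ideal I -> ext_ideal phi I g -> exists2 f, I f & g = map_mpoly phi f.
Proof.
move=> [I0 ID IM] Ig.
apply: (gen_ideal_min (J := fun g => exists2 f, I f & g = map_mpoly phi f) _ _ Ig);
  last by move=> _ [f [If ->]]; exists f.
split=> [|_ _ [f If ->] [h Ih ->]|r _ [f If ->]].
- by exists 0; rewrite ?rmorph0.
- by exists (f + h); rewrite ?rmorphD //; apply: ID.
- have [r' <-] := map_mpoly_surj phi_surj r.
  by exists (r' * f); rewrite ?rmorphM //; apply: IM.
Qed.

End ExtIdeal.

Section InitialIdeal.
Variables (n : nat) (A B : comNzRingType) (phi : {rmorphism A -> B}).
Variables (lt : rel 'X_{1..n}) (I : {mpoly A[n]} -> Prop).

Lemma map_initial_term_mem f t :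
  I f -> initial_term lt f t -> initial_ideal lt (ext_ideal phi I) (map_mpoly phi t).
Proof.
move=> If [_ [E [Elead ->]]]; rewrite map_mpoly_term.
have [->|fE] := eqVneq (map_mpoly phi f)@_E 0.
  by rewrite scale0r; exact: ideal0 (gen_ideal_is_ideal _).
apply: mem_gen_ideal; exists (map_mpoly phi f); split.
  by apply: mem_gen_ideal; exists f.
by apply: initial_term_lead; apply: is_lead_mono_map; rewrite // -mcoeff_map_mpoly.
Qed.

Hypotheses (I_ideal : is_ideal I) (phi_surj : forall b : B, exists a : A, phi a = b).
Hypothesis ker_phi : forall a, phi a = 0 -> I a%:MP.

Lemma initial_term_ext_mem g t :
  ext_ideal phi I g -> initial_term lt g t -> ext_ideal phi (initial_ideal lt I) t.
Proof.
case/(ext_ideal_image phi_surj I_ideal) => f If ->.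
rewrite -(map_drop_ker_terms phi f) => -[_ [E [Elead ->]]].
set f1 := drop_ker_terms phi f; rewrite -map_mpoly_term.
apply: mem_gen_ideal; exists (f1@_E *: 'X_[E]); split => //.
apply: mem_gen_ideal; exists f1; split; first exact: drop_ker_terms_ideal.
apply: initial_term_lead; apply: (is_lead_mono_subset _ _ Elead).
- by move=> F; rewrite msupp_drop_ker_terms; apply.
- by case: Elead => /msupp_map_subset.
Qed.

End InitialIdeal.

Theorem lemma3p9 (n : nat) (A : comNzRingType) (lt : rel 'X_{1..n})
    (I : {mpoly A[n]} -> Prop) (B : comNzRingType) (phi : {rmorphism A -> B}) :
  noetherian A ->
  monomial_order lt ->
  is_ideal I ->
  (* B = A/(I ∩ A), presented by a surjective ring morphism with kernel I ∩ A *)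
  (forall b : B, exists a : A, phi a = b) ->
  (forall a : A, phi a = 0 <-> I (a%:MP)) ->
  forall q : {mpoly B[n]},
    ext_ideal phi (initial_ideal lt I) q <->
    initial_ideal lt (ext_ideal phi I) q.
Proof.
move=> _ _ I_ideal phi_surj ker_phi q; split.
- apply: ext_gen_ideal_min; first exact: gen_ideal_is_ideal.
  by move=> t [f [If t_in]]; apply: map_initial_term_mem t_in.
- apply: gen_ideal_min; first exact: gen_ideal_is_ideal.
  move=> t [g [Ig g_in]]; apply: initial_term_ext_mem Ig g_in => // a.
  by case: (ker_phi a).
Qed.
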